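(* Let $\phi\in\mathbb{R}^K$ and define the objective $$V(\phi) = \mathbb{E}_{Z \sim p(Z;\phi)}\, \mathbb{E}\big[Y_i(Z, Z_0) \,\big|\, Z\big], \qquad p(Z;\phi)=\prod_{k=1}^K \mathrm{Bern}(z_k;\sigma(\phi_k)),$$ where $\sigma(x)=1/(1+e^{-x})$, $Z_0\in\{0,1\}^K$ is a fixed baseline product, and the inner expectation is over a random individual $i$ drawn from the population and over that individual's random choice. Let $u=(u_1,\dots,u_K) \sim \prod_{k=1}^K \mathrm{Unif}(0,1)$ and define $Z_1(u) = \mathbf{1}[u > \sigma(-\phi)]$ and $Z_2(u) = \mathbf{1}[u < \sigma(\phi)]$ (componentwise indicators, with $\sigma$ applied componentwise). Let $\mathcal{A}_i = \{Y_i(Z_1(u),Z_0) \neq Y_i(Z_2(u),Z_0)\}$ and let $p(\mathcal{A}_i)$ denote the probability of $\mathcal{A}_i$ (for the given $u$ and individual $i$). Then the random vector $$\tilde{g} = \big(2Y_i(Z_1(u), Z_2(u)) - 1\big)\Big(u-\tfrac12\Big)\, p(\mathcal{A}_i)$$ satisfies $\mathbb{E}[\tilde{g}] = \nabla_\phi V(\phi)$.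
   Context: Products are binary vectors in $\{0,1\}^K$. For individual $i$ and products $A,B$, the choice outcome $Y_i(A,B)\in\{0,1\}$ equals $1$ if individual $i$ chooses $A$ over $B$ and $0$ otherwise. Choices follow the random utility maximisation model: for individual $i$, product $Z$ has utility $V_i(Z)+\epsilon$, where $V_i:\{0,1\}^K\to\mathbb{R}$ is a deterministic representative utility (no parametric form assumed) and the noise terms are independent standard Gumbel random variables, drawn independently for each product in each comparison; the alternative with larger utility is chosen. Hence $P(Y_i(A,B)=1)=\frac{e^{V_i(A)}}{e^{V_i(A)}+e^{V_i(B)}}$ and outcomes of distinct paired comparisons by the same individual are independent. Indicators $\mathbf{1}[u>\sigma(-\phi)]$ etc. are taken componentwise, producing a vector in $\{0,1\}^K$; $u-\tfrac12$ is the vector $(u_k-\tfrac12)_k$. *)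

From HB Require Import structures.
From mathcomp Require Import all_boot all_order all_algebra.
From mathcomp Require Import all_classical all_reals all_analysis.
Set Implicit Arguments. Unset Strict Implicit. Unset Printing Implicit Defensive.
Import Order.TTheory GRing.Theory Num.Theory.
Local Open Scope classical_set_scope.
Local Open Scope ring_scope.

Section Defs.
Variable R : realType.

Definition Prod (K : nat) := {ffun 'I_K -> bool}.

Definition sigma (x : R) : R := 1 / (1 + expR (- x)).

Definition bern (p : R) (y : bool) : R := if y then p else 1 - p.

(* MNL / logit choice probability P(Y_i(A,B)=1) for representative utility v *)
Definition pchoice K (v : Prod K -> R) (A B : Prod K) : R :=
  expR (v A) / (expR (v A) + expR (v B)).

Definition pZ K (phi : 'I_K -> R) (Z : Prod K) : R :=
  \prod_(k < K) bern (sigma (phi k)) (Z k).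

Definition Vobj d (I : measurableType d) (mu : probability I R) K
    (Vi : I -> Prod K -> R) (Z0 : Prod K) (phi : 'I_K -> R) : R :=
  \sum_(Z : Prod K) pZ phi Z *
    Rintegral mu setT (fun i => \sum_(y : bool) (y%:R) * bern (pchoice (Vi i) Z Z0) y).

Definition Z1 K (phi : 'I_K -> R) (u : nat -> R) : Prod K :=
  [ffun k : 'I_K => sigma (- phi k) < u (nat_of_ord k)].
Definition Z2 K (phi : 'I_K -> R) (u : nat -> R) : Prod K :=
  [ffun k : 'I_K => u (nat_of_ord k) < sigma (phi k)].

(* p(A_i) = P(Y_i(Za,Z0) <> Y_i(Zb,Z0)) for fixed individual utility v.
   If Za = Zb the two comparisons are the same comparison (same random
   outcome), so the event is empty; otherwise they are distinct comparisons,
   hence independent Bernoulli outcomes. *)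
Definition pA K (v : Prod K -> R) (Z0 Za Zb : Prod K) : R :=
  if Za == Zb then 0 else
  \sum_(y1 : bool) \sum_(y2 : bool)
     (if y1 != y2 then bern (pchoice v Za Z0) y1 * bern (pchoice v Zb Z0) y2 else 0).

(* integral over the unit cube [0,1]^n w.r.t. Lebesgue measure, as iterated
   integrals over coordinates 0..n-1 of u : nat -> R (coordinates >= n unused) *)
Fixpoint cube_int (n : nat) (f : (nat -> R) -> R) : R :=
  match n with
  | 0 => f (fun _ => 0)
  | n'.+1 => Rintegral (@lebesgue_measure R) `[0, 1]
               (fun x => cube_int n' (fun u => f (fun j => if j == n' then x else u j)))
  end.

Definition Egtilde d (I : measurableType d) (mu : probability I R) K
    (Vi : I -> Prod K -> R) (Z0 : Prod K) (phi : 'I_K -> R) (k : 'I_K) : R :=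
  cube_int K (fun u =>
    Rintegral mu setT (fun i =>
      \sum_(y : bool) bern (pchoice (Vi i) (Z1 phi u) (Z2 phi u)) y *
        ((2 * y%:R - 1) * (u (nat_of_ord k) - 2^-1) * pA (Vi i) Z0 (Z1 phi u) (Z2 phi u)))).

End Defs.

From HB Require Import structures.
From mathcomp Require Import all_boot all_order all_algebra.
From mathcomp Require Import all_classical all_reals all_analysis.
From mathcomp Require Import ring.
Set Implicit Arguments. Unset Strict Implicit. Unset Printing Implicit Defensive.
Import Order.TTheory GRing.Theory Num.Theory.
Import numFieldNormedType.Exports.
Local Open Scope classical_set_scope.
Local Open Scope ring_scope.

(* Write W Z (mean_pchoice) for the population average of P(Z is chosen
   over Z0). Then V(phi) = sum_Z p(Z; phi) W Z is affine in sigma(phi_k), so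
   its k-th partial derivative is sigma'(phi_k) times E[W(Z_-k, 1) - W(Z_-k, 0)]
   over the other coordinates. On the estimator side the weight p(A_i) cancels
   the MNL denominator of Y_i(Z1, Z2), leaving
   E[g~ | u] = (u_k - 1/2) (W(Z1 u) - W(Z2 u)). As Z1 and Z2 threshold u
   coordinatewise, this integrand is a finite sum of products of functions of
   single coordinates, so the cube integral factorises into one-dimensional
   integrals; those of u_k - 1/2 over {u_k > sigma(-phi_k)} and
   {u_k < sigma(phi_k)} are +- sigma(phi_k) (1 - sigma(phi_k)) / 2. *)

Local Notation Int01 f := (\int[lebesgue_measure]_(x in `[0, 1]) f x).

Section sigmoid.
Variable R : realType.
Implicit Types x t : R.

Lemma sigma_gt0 x : 0 < sigma x.
Proof. by rewrite /sigma div1r invr_gt0 addr_gt0 // expR_gt0. Qed.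

Lemma sigma_lt1 x : sigma x < 1.
Proof. by rewrite /sigma div1r invf_lt1 ?addr_gt0 ?expR_gt0 // ltrDl expR_gt0. Qed.

Lemma sigmaN x : sigma (- x) = 1 - sigma x.
Proof.
have ex_neq0 : expR x != 0 by rewrite gt_eqF // expR_gt0.
have den_neq0 : 1 + expR x != 0 by rewrite gt_eqF // addr_gt0 // expR_gt0.
rewrite /sigma opprK expRN; field.
by rewrite ex_neq0 addrC den_neq0.
Qed.

Lemma is_derive_sigma t : is_derive t 1 (@sigma R) (sigma t * (1 - sigma t)).
Proof.
have den_neq0 : 1 + expR (- t) != 0 by rewrite gt_eqF // addr_gt0 // expR_gt0.
have -> : @sigma R = (fun y => (1 + expR (- y))^-1).
  by apply/funext => y; rewrite /sigma div1r.
have d_expN : is_derive t 1 (fun y : R => expR (- y)) (- expR (- t)).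
  have := is_derive1_comp (is_derive_expR (- t)) (is_deriveNid t 1).
  by rewrite mulrN1.
have d_den : is_derive t 1 (fun y : R => 1 + expR (- y)) (- expR (- t)).
  by have := is_deriveD (is_derive_cst (1 : R) t 1) d_expN; rewrite sub0r.
apply: is_derive_eq (is_deriveV (f := fun y => 1 + expR (- y)) den_neq0 d_den) _.
by rewrite /GRing.scale /=; field.
Qed.

Lemma continuous_sigma : continuous (@sigma R).
Proof.
move=> x; have [dsigma _] := is_derive_sigma x.
exact/differentiable_continuous/derivable1_diffP.
Qed.

Lemma pchoiceE K (v : Prod K -> R) A B : pchoice v A B = sigma (v A - v B).
Proof.
have eA_neq0 : expR (v A) != 0 by rewrite gt_eqF // expR_gt0.
have den_neq0 : expR (v A) + expR (v B) != 0 by rewrite gt_eqF // addr_gt0 // expR_gt0.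
rewrite /pchoice /sigma opprB expRB; field.
by rewrite eA_neq0 den_neq0.
Qed.

(* With a, b, c the exponentiated utilities of Za, Zb, Z0:
   2 P(Za over Zb) - 1 = (a - b) / (a + b) and p(A) = c (a + b) / ((a + c) (b + c)),
   so a + b cancels and the product is c (a - b) / ((a + c) (b + c)), which is
   P(Za over Z0) - P(Zb over Z0). *)
Lemma expect_sign_pA K (v : Prod K -> R) (Z0 Za Zb : Prod K) (w : R) :
  \sum_(y : bool) bern (pchoice v Za Zb) y * ((2 * y%:R - 1) * w * pA v Z0 Za Zb)
  = w * (pchoice v Za Z0 - pchoice v Zb Z0).
Proof.
rewrite /pA; case: eqP => [->|_].
  by rewrite subrr !mulr0 big1 // => y _; rewrite !mulr0.
rewrite !big_bool /= /bern /pchoice.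
have ha : 0 < expR (v Za) := expR_gt0 _.
have hb : 0 < expR (v Zb) := expR_gt0 _.
have hc : 0 < expR (v Z0) := expR_gt0 _.
set a := expR (v Za) in ha *; set b := expR (v Zb) in hb *; set c := expR (v Z0) in hc *.
have ab_neq0 : a + b != 0 by rewrite gt_eqF // addr_gt0.
have ac_neq0 : a + c != 0 by rewrite gt_eqF // addr_gt0.
have bc_neq0 : b + c != 0 by rewrite gt_eqF // addr_gt0.
by field; rewrite ab_neq0 ac_neq0 bc_neq0.
Qed.

End sigmoid.

Section integration.
Variable R : realType.
Notation leb := (@lebesgue_measure R).

Lemma integrable_EFinZl d (T : measurableType d) (mu : {measure set T -> \bar R})
    (D : set T) (r : R) (f : T -> R) :
  measurable D -> mu.-integrable D (EFin \o f) ->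
  mu.-integrable D (EFin \o (fun x => r * f x)).
Proof.
by move=> mD /(integrableZl mD r); apply: eq_integrable.
Qed.

Lemma Rintegral_sum d (T : measurableType d) (mu : {measure set T -> \bar R})
    (D : set T) (I : Type) (s : seq I) (f : I -> T -> R) :
  measurable D -> (forall i, mu.-integrable D (EFin \o f i)) ->
  \int[mu]_(x in D) \sum_(i <- s) f i x = \sum_(i <- s) \int[mu]_(x in D) f i x.
Proof.
move=> mD intf; elim: s => [|i s IHs].
  by under eq_Rintegral do rewrite big_nil; rewrite big_nil Rintegral_cst // mul0r.
under eq_Rintegral do rewrite big_cons.
rewrite RintegralD // ?IHs ?big_cons //.
apply: (eq_integrable mD (fun x => \sum_(j <- s) (EFin \o f j) x)).
  by move=> x _; rewrite /= sumEFin.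
exact: integrable_sum.
Qed.

Lemma integrable_pchoice d (I : measurableType d) (mu : probability I R) K
    (Vi : I -> Prod K -> R) (A B : Prod K) :
  (forall Z, measurable_fun setT (fun i => Vi i Z)) ->
  mu.-integrable setT (EFin \o (fun i => pchoice (Vi i) A B)).
Proof.
move=> mVi; apply: measurable_bounded_integrable => //.
- exact: le_lt_trans (probability_le1 mu measurableT) (ltry 1).
- under eq_fun do rewrite pchoiceE.
  apply: measurableT_comp.
    exact: measurable_realfun.continuous_measurable_fun (@continuous_sigma R).
  exact: measurable_realfun.measurable_funB.
- exists 1; split => // M M_gt1 i _ /=.
  rewrite pchoiceE ger0_norm; last exact/ltW/sigma_gt0.
  exact/ltW/(lt_trans (sigma_lt1 _)).
Qed.

Lemma integrable_continuous_itvcc (g : R -> R) (a b : R) :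
  continuous g -> leb.-integrable `[a, b] (EFin \o g).
Proof.
move=> cg; apply: continuous_compact_integrable; first exact: segment_compact.
exact: continuous_subspaceT.
Qed.

Lemma integrable_continuous_patch01 (g : R -> R) (S : set R) :
  measurable S -> continuous g -> leb.-integrable `[0, 1] (EFin \o (g \_ S)).
Proof.
move=> mS cg; rewrite -restrict_EFin; apply/integrable_restrict => //.
by apply: integrableS (integrable_continuous_itvcc 0 1 cg) => //; exact: measurableI.
Qed.

Section primitive.
Variables (g F : R -> R).
Hypotheses (cg : continuous g) (dF : forall x : R, is_derive x (1 : R) F (g x)).

Lemma Rintegral_itvcc_primitive (a b : R) :
  a < b -> \int[leb]_(x in `[a, b]) g x = F b - F a.
Proof.
move=> ab; have cF : continuous F.
  by move=> x; have [dFx _] := dF x; exact/differentiable_continuous/derivable1_diffP.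
rewrite /Rintegral (continuous_FTC2 (F := F) ab) //.
- exact: continuous_subspaceT.
- split; first by move=> x _; have [] := dF x.
  + exact/cvg_at_right_filter/cF.
  + exact/cvg_at_left_filter/cF.
- by move=> x _; rewrite derive1E; have [_ ->] := dF x.
Qed.

Variable c : R.
Hypotheses (c_gt0 : 0 < c) (c_lt1 : c < 1).

Lemma Rintegral01_patch_itvy (b : bool) :
  Int01 (g \_ [set` Interval (BSide b c) +oo%O]) = F 1 - F c.
Proof.
rewrite -Rintegral_mkcondr.
have -> : `[0, 1] `&` [set` Interval (BSide b c) +oo%O] =
          [set` Interval (BSide b c) (BRight 1)].
  apply/seteqP; split => x; case: b; rewrite /= !in_itv /= ?andbT.
  - by move=> [/andP[_ ->] ->].
  - by move=> [/andP[_ ->] ->].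
  - by move=> /andP[cx ->]; rewrite (le_trans (ltW c_gt0) cx).
  - by move=> /andP[cx ->]; rewrite (le_trans (ltW c_gt0) (ltW cx)).
case: b; first exact: Rintegral_itvcc_primitive.
rewrite Rintegral_itv_obnd_cbnd; first exact: Rintegral_itvcc_primitive.
by apply: integrableS (integrable_continuous_itvcc c 1 cg) => //; exact: subset_itv_oc_cc.
Qed.

Lemma Rintegral01_patch_Nyitv (b : bool) :
  Int01 (g \_ [set` Interval -oo%O (BSide b c)]) = F c - F 0.
Proof.
rewrite -Rintegral_mkcondr.
have -> : `[0, 1] `&` [set` Interval -oo%O (BSide b c)] =
          [set` Interval (BLeft 0) (BSide b c)].
  apply/seteqP; split => x; case: b; rewrite /= !in_itv /= ?andbT.
  - by move=> [/andP[-> _] ->].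
  - by move=> [/andP[-> _] ->].
  - by move=> /andP[-> xc]; rewrite (le_trans (ltW xc) (ltW c_lt1)).
  - by move=> /andP[-> xc]; rewrite (le_trans xc (ltW c_lt1)).
case: b; last exact: Rintegral_itvcc_primitive.
rewrite Rintegral_itv_bndo_bndc; first exact: Rintegral_itvcc_primitive.
by apply: integrableS (integrable_continuous_itvcc 0 c cg) => //; exact: subset_itv_co_cc.
Qed.

End primitive.
End integration.

Lemma prod_patch (T : Type) (R : realType) (I : finType) (g : I -> T -> R)
    (S : I -> set T) (x : I -> T) :
  \prod_i (g i \_ (S i)) (x i) = \prod_i g i (x i) * [forall i, x i \in S i]%:R.
Proof.
have [xS | /forallPn[i xNS]] := boolP [forall i, x i \in S i].
  by rewrite mulr1; apply: eq_bigr => i _; rewrite patchE (forallP xS i).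
by rewrite mulr0 (bigD1 i) //= patchE (negbTE xNS) mul0r.
Qed.

Section cube_int.
Variables (R : realType) (K : nat) (A : finType).

(* [cube_int n] integrates the coordinates below [n]; the others are
   frozen at [0]. *)
Lemma cube_int_sum_prod_partial n (w : A -> R) (h : A -> 'I_K -> R -> R) :
  (n <= K)%N -> (forall a j, (@lebesgue_measure R).-integrable `[0, 1] (EFin \o h a j)) ->
  cube_int n (fun u => \sum_a w a * \prod_(j < K) h a j (u j)) =
  \sum_a w a * \prod_(j < K) (if (j < n)%N then Int01 (h a j) else h a j 0).
Proof.
elim: n w h => [//|n IHn] w h nK int_h /=.
pose n' : 'I_K := Ordinal nK.
have jn_neq j : j != n' -> (nat_of_ord j == n) = false.
  by move=> jn; apply/negbTE; apply: contra jn => /eqP jn; apply/eqP/val_inj.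
pose rest a := \prod_(j < K | j != n') (if (j < n)%N then Int01 (h a j) else h a j 0).
transitivity (Int01 (fun x => \sum_a w a * rest a * h a n' x)).
  apply: eq_Rintegral => x _.
  have int_hx a j : (@lebesgue_measure R).-integrable `[0, 1]
      (EFin \o (fun y => h a j (if nat_of_ord j == n then x else y))).
    case: eqP => _; last exact: int_h.
    by apply: integrable_continuous_itvcc; exact: cst_continuous.
  rewrite (IHn w _ (ltnW nK) int_hx).
  apply: eq_bigr => a _; rewrite (bigD1 n') //= ltnn eqxx [h a n' x * _]mulrC mulrA.
  congr (_ * _ * _).
  by apply: eq_bigr => j /jn_neq ->.
rewrite Rintegral_sum //; last by move=> a; apply: integrable_EFinZl.
apply: eq_bigr => a _; rewrite RintegralZl // [in RHS](bigD1 n') //= ltnSn.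
rewrite -mulrA; congr (_ * _); rewrite mulrC; congr (_ * _); apply: eq_bigr => j /jn_neq jn.
by rewrite [(j < n.+1)%N]ltnS [(j <= n)%N]leq_eqVlt jn.
Qed.

Lemma cube_int_sum_prod (w : A -> R) (h : A -> 'I_K -> R -> R) :
  (forall a j, (@lebesgue_measure R).-integrable `[0, 1] (EFin \o h a j)) ->
  cube_int K (fun u => \sum_a w a * \prod_(j < K) h a j (u j)) =
  \sum_a w a * \prod_(j < K) Int01 (h a j).
Proof.
move=> int_h; rewrite cube_int_sum_prod_partial //; apply: eq_bigr => a _.
by congr (_ * _); apply: eq_bigr => j _; rewrite ltn_ord.
Qed.

End cube_int.

Section expectation_pZ.
Variables (R : realType) (K : nat) (phi : 'I_K -> R) (k : 'I_K).

Definition pZ_but (Z : Prod K) : R :=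
  \prod_(j < K | j != k) bern (sigma (phi j)) (Z j).

Definition flip_diff (W : Prod K -> R) : R :=
  \sum_(Z : Prod K) pZ_but Z * (if Z k then W Z else - W Z).

Lemma pZ_set (t : R) (Z : Prod K) :
  pZ (fun j => if j == k then t else phi j) Z = bern (sigma t) (Z k) * pZ_but Z.
Proof.
rewrite /pZ (bigD1 k) //= eqxx; congr (_ * _).
by apply: eq_bigr => j /negbTE ->.
Qed.

Lemma expect_pZ_set (W : Prod K -> R) (t : R) :
  \sum_(Z : Prod K) pZ (fun j => if j == k then t else phi j) Z * W Z =
  sigma t * flip_diff W + \sum_(Z : Prod K) (if Z k then 0 else pZ_but Z * W Z).
Proof.
rewrite /flip_diff mulr_sumr -big_split /=; apply: eq_bigr => Z _.
by rewrite pZ_set /bern; case: (Z k); ring.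
Qed.

Lemma is_derive_expect_pZ (W : Prod K -> R) :
  is_derive (phi k) 1
    (fun t => \sum_(Z : Prod K) pZ (fun j => if j == k then t else phi j) Z * W Z)
    (sigma (phi k) * (1 - sigma (phi k)) * flip_diff W).
Proof.
under eq_fun do rewrite expect_pZ_set.
set c := flip_diff W; set b := \sum_(Z : Prod K) _.
have -> : (fun t => sigma t * c + b) = @sigma R * cst c + cst b by apply/funext.
have := is_deriveD (is_deriveM (is_derive_sigma (phi k)) (is_derive_cst c (phi k) 1))
  (is_derive_cst b (phi k) 1).
by rewrite /GRing.scale /= mulr0 add0r addr0 [c * _]mulrC.
Qed.

End expectation_pZ.

Section antithetic.
Variables (R : realType) (K : nat) (phi : 'I_K -> R) (k : 'I_K).

Definition coord_factor (j : 'I_K) : R -> R :=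
  if j == k then fun x => x - 2^-1 else cst 1.

Definition coord_factor_primitive (j : 'I_K) : R -> R :=
  if j == k then fun x => (x ^+ 2 - x) / 2 else id.

Lemma is_derive_coord_factor_primitive j (x : R) :
  is_derive x 1 (coord_factor_primitive j) (coord_factor j x).
Proof.
rewrite /coord_factor_primitive /coord_factor; case: (j == k); last exact: is_derive_id.
have -> : (fun y : R => (y ^+ 2 - y) / 2) = 2^-1 \*: (id * id - id).
  by apply/funext => y /=; rewrite expr2 mulrC.
by apply: is_derive_eq; rewrite /GRing.scale /=; field.
Qed.

Lemma continuous_coord_factor j : continuous (coord_factor j).
Proof.
rewrite /coord_factor; case: (j == k); last exact: cst_continuous.
by move=> x; apply: cvgB; [exact: cvg_id | exact: cvg_cst].
Qed.

Lemma prod_coord_factor (u : nat -> R) :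
  \prod_(j < K) coord_factor j (u j) = u k - 2^-1.
Proof.
rewrite (bigD1 k) //= big1 ?mulr1 => [|j /negbTE jk]; rewrite /coord_factor ?eqxx //.
by rewrite jk.
Qed.

Definition mem_vec (T : 'I_K -> set R) (u : nat -> R) : Prod K :=
  [ffun j : 'I_K => u j \in T j].

Definition cell (T : 'I_K -> set R) (j : 'I_K) (b : bool) : set R :=
  if b then T j else ~` T j.

Lemma cellsE T (u : nat -> R) (Z : Prod K) :
  [forall j : 'I_K, u j \in cell T j (Z j)] = (Z == mem_vec T u).
Proof.
apply/forallP/eqP => [uZ | -> j]; last first.
  by rewrite /cell ffunE; case: ifP; rewrite ?in_setC => ->.
apply/ffunP => j; rewrite ffunE; have := uZ j.
by rewrite /cell; case: (Z j) => [-> // |]; rewrite in_setC => /negbTE ->.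
Qed.

Lemma sum_prod_cells T (W : Prod K -> R) (u : nat -> R) :
  \sum_(Z : Prod K) W Z * \prod_(j < K) (coord_factor j \_ (cell T j (Z j))) (u j) =
  (u k - 2^-1) * W (mem_vec T u).
Proof.
under eq_bigr do rewrite prod_patch prod_coord_factor cellsE mulrCA mulr_natr mulrb.
by rewrite -mulr_sumr -big_mkcond big_pred1_eq.
Qed.

Definition Z1_ones (j : 'I_K) : set R := `]sigma (- phi j), +oo[.
Definition Z2_ones (j : 'I_K) : set R := `]-oo, sigma (phi j)[.

Lemma Z1_mem_vec (u : nat -> R) : Z1 phi u = mem_vec Z1_ones u.
Proof. by apply/ffunP => j; rewrite !ffunE mem_setE in_itv /= andbT. Qed.

Lemma Z2_mem_vec (u : nat -> R) : Z2 phi u = mem_vec Z2_ones u.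
Proof. by apply/ffunP => j; rewrite !ffunE mem_setE in_itv. Qed.

Section unit_interval.
Variables (c : R) (b : bool).
Hypotheses (c_gt0 : 0 < c) (c_lt1 : c < 1).

Lemma Rintegral01_coord_factor_itvy j :
  Int01 (coord_factor j \_ [set` Interval (BSide b c) +oo%O]) =
  if j == k then c * (1 - c) / 2 else 1 - c.
Proof.
rewrite (Rintegral01_patch_itvy (@continuous_coord_factor j)
  (@is_derive_coord_factor_primitive j)) //.
by rewrite /coord_factor_primitive; case: (j == k) => //=; field.
Qed.

Lemma Rintegral01_coord_factor_Nyitv j :
  Int01 (coord_factor j \_ [set` Interval -oo%O (BSide b c)]) =
  if j == k then - (c * (1 - c) / 2) else c.
Proof.
rewrite (Rintegral01_patch_Nyitv (@continuous_coord_factor j)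
  (@is_derive_coord_factor_primitive j)) //.
by rewrite /coord_factor_primitive; case: (j == k) => //=; field.
Qed.

End unit_interval.

Lemma Rintegral01_Z1_cell j b :
  Int01 (coord_factor j \_ (cell Z1_ones j b)) =
  if j == k then (if b then 1 else -1) * (sigma (phi j) * (1 - sigma (phi j)) / 2)
  else bern (sigma (phi j)) b.
Proof.
have c_gt0 := sigma_gt0 (- phi j); have c_lt1 := sigma_lt1 (- phi j).
rewrite /cell /Z1_ones /bern; case: b; last rewrite setCitvr.
  by rewrite Rintegral01_coord_factor_itvy // sigmaN; case: (j == k); ring.
by rewrite Rintegral01_coord_factor_Nyitv // sigmaN; case: (j == k); ring.
Qed.

Lemma Rintegral01_Z2_cell j b :
  Int01 (coord_factor j \_ (cell Z2_ones j b)) =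
  if j == k then (if b then -1 else 1) * (sigma (phi j) * (1 - sigma (phi j)) / 2)
  else bern (sigma (phi j)) b.
Proof.
have c_gt0 := sigma_gt0 (phi j); have c_lt1 := sigma_lt1 (phi j).
rewrite /cell /Z2_ones /bern; case: b; last rewrite setCitvl.
  by rewrite Rintegral01_coord_factor_Nyitv //; case: (j == k); ring.
by rewrite Rintegral01_coord_factor_itvy //; case: (j == k); ring.
Qed.

Lemma prod_bern_but (I : 'I_K -> bool -> R) (Z : Prod K) :
  (forall j b, j != k -> I j b = bern (sigma (phi j)) b) ->
  \prod_(j < K) I j (Z j) = I k (Z k) * pZ_but phi k Z.
Proof.
by move=> IE; rewrite (bigD1 k) //=; congr (_ * _); apply: eq_bigr => j /IE ->.
Qed.

Lemma cube_int_antithetic (W : Prod K -> R) :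
  cube_int K (fun u => (u k - 2^-1) * (W (Z1 phi u) - W (Z2 phi u))) =
  sigma (phi k) * (1 - sigma (phi k)) * flip_diff phi k W.
Proof.
pose w (a : Prod K + Prod K) := match a with inl Z => W Z | inr Z => - W Z end.
pose h (a : Prod K + Prod K) j := match a with
  | inl Z => coord_factor j \_ (cell Z1_ones j (Z j))
  | inr Z => coord_factor j \_ (cell Z2_ones j (Z j)) end.
transitivity (cube_int K (fun u => \sum_a w a * \prod_(j < K) h a j (u j))).
  congr cube_int; apply/funext => u; rewrite big_sumType /=.
  rewrite (sum_prod_cells Z1_ones) (sum_prod_cells Z2_ones (fun Z => - W Z)).
  by rewrite -Z1_mem_vec -Z2_mem_vec; ring.
rewrite cube_int_sum_prod; last first.
  move=> [] Z j; apply: integrable_continuous_patch01 (@continuous_coord_factor j);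
  by rewrite /cell; case: (Z j); try apply: measurableC; exact: measurable_itv.
rewrite big_sumType /= /flip_diff mulr_sumr -big_split /=; apply: eq_bigr => Z _.
rewrite (@prod_bern_but (fun j b => Int01 (coord_factor j \_ (cell Z1_ones j b)))); last first.
  by move=> j b /negbTE jk; rewrite Rintegral01_Z1_cell jk.
rewrite (@prod_bern_but (fun j b => Int01 (coord_factor j \_ (cell Z2_ones j b)))); last first.
  by move=> j b /negbTE jk; rewrite Rintegral01_Z2_cell jk.
by rewrite Rintegral01_Z1_cell Rintegral01_Z2_cell eqxx; case: (Z k); field.
Qed.

End antithetic.

Section choice_model.
Variables (R : realType) (d : measure_display) (I : measurableType d).
Variables (mu : probability I R) (K : nat) (Vi : I -> Prod K -> R) (Z0 : Prod K).
Hypothesis mVi : forall Z : Prod K, measurable_fun setT (fun i => Vi i Z).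

Definition mean_pchoice (Z : Prod K) : R :=
  \int[mu]_(i in setT) pchoice (Vi i) Z Z0.

Lemma Vobj_mean_pchoice (phi : 'I_K -> R) :
  Vobj mu Vi Z0 phi = \sum_(Z : Prod K) pZ phi Z * mean_pchoice Z.
Proof.
apply: eq_bigr => Z _; congr (_ * _); apply: eq_Rintegral => i _.
by rewrite big_bool /= /bern mul1r mul0r addr0.
Qed.

Lemma Egtilde_mean_pchoice (phi : 'I_K -> R) (k : 'I_K) :
  Egtilde mu Vi Z0 phi k =
  cube_int K (fun u =>
    (u k - 2^-1) * (mean_pchoice (Z1 phi u) - mean_pchoice (Z2 phi u))).
Proof.
congr cube_int; apply/funext => u.
under eq_Rintegral do rewrite expect_sign_pA mulrBr.
have int_w Z : mu.-integrable setT (EFin \o (fun i => (u k - 2^-1) * pchoice (Vi i) Z Z0)).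
  exact/integrable_EFinZl/integrable_pchoice.
by rewrite RintegralB // mulrBr !RintegralZl //; exact: integrable_pchoice.
Qed.

End choice_model.

Theorem lemma3 (R : realType) (K : nat) (d : measure_display)
    (I : measurableType d) (mu : probability I R)
    (Vi : I -> Prod K -> R) (Z0 : Prod K) (phi : 'I_K -> R)
    (hVi : forall Z : Prod K, measurable_fun setT (fun i => Vi i Z))
    (k : 'I_K) :
  is_derive (phi k) (1 : R)
    (fun t : R => Vobj mu Vi Z0 (fun j => if j == k then t else phi j))
    (Egtilde mu Vi Z0 phi k).
Proof.
rewrite Egtilde_mean_pchoice // cube_int_antithetic.
under eq_fun do rewrite Vobj_mean_pchoice.
exact: is_derive_expect_pZ.
Qed.
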